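(* Let $y>0$ be fixed. For $\xi\in\mathbf{R}^{2\times 2}$ let $[\xi]=\xi-\xi_{11}\,e_1\otimes e_1$, where $e_1=(1,0)$, and define $W:\mathbf{R}^{2\times 2}\to\mathbf{R}$ by \[W(\xi)=\big|([\xi],\det\xi-y)\big|,\] the Euclidean norm of the vector $([\xi],\det\xi-y)\in\mathbf{R}^{2\times2}\times\mathbf{R}\cong\mathbf{R}^5$. Then for every $\xi\in\mathbf{R}^{2\times 2}$ and every $\eta\in\mathbf{R}^{2\times 2}$, \[W(\xi+\eta)-W(\xi)-DW(\xi)\cdot\eta\;\ge\;\rho(\xi)\det\eta,\qquad\text{where }\rho(\xi)=\frac{\det\xi-y}{W(\xi)}.\]
   Context: For $2\times2$ matrices, $\xi\cdot\eta=\mathrm{tr}(\xi^T\eta)$; for $a,b\in\mathbf{R}^2$, $a\otimes b$ is the matrix with $(i,j)$ entry $a_ib_j$. The function $W$ never vanishes (since $y\neq0$) and is differentiable everywhere; $DW(\xi)$ denotes its derivative (gradient) at $\xi$. *)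

From HB Require Import structures.
From mathcomp Require Import all_boot all_order all_algebra.
From mathcomp Require Import all_classical all_reals all_analysis.
Set Implicit Arguments. Unset Strict Implicit. Unset Printing Implicit Defensive.
Import Order.TTheory GRing.Theory Num.Theory.
Import numFieldNormedType.Exports.
Local Open Scope ring_scope.

(* [xi] = xi - xi_11 e1 (x) e1 : zero out the (1,1) entry (index 0,0). *)
Definition bracket {R : realType} (xi : 'M[R]_2) : 'M[R]_2 :=
  xi - (xi 0 0) *: delta_mx 0 0.

Definition W {R : realType} (y : R) (xi : 'M[R]_2) : R :=
  Num.sqrt ((\sum_(i < 2) \sum_(j < 2) (bracket xi i j) ^+ 2)
            + (\det xi - y) ^+ 2).

Definition rho {R : realType} (y : R) (xi : 'M[R]_2) : R :=
  (\det xi - y) / W y xi.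

From HB Require Import structures.
From mathcomp Require Import all_boot all_order all_algebra.
From mathcomp Require Import all_classical all_reals all_analysis.
From mathcomp Require Import ring lra.
Import Order.TTheory GRing.Theory Num.Theory.
Import numFieldNormedType.Exports.
Set Implicit Arguments. Unset Strict Implicit. Unset Printing Implicit Defensive.
Local Open Scope ring_scope.

(* W = |v| with v(xi) = ([xi], det xi - y).  Since v is quadratic,
   v(xi + eta) = v(xi) + Dv(xi) eta + (0, det eta) exactly, and by
   Cauchy-Schwarz the norm lies above its tangent planes:
   |v(xi + eta)| >= v(xi) . v(xi + eta) / |v(xi)|
                  = W(xi) + DW(xi) eta + rho(xi) det eta. *)

Lemma det_mx22 (R : comPzRingType) (M : 'M[R]_2) :
  \det M = M 0 0 * M 1 1 - M 0 1 * M 1 0.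
Proof.
rewrite (expand_det_row _ 0) !big_ord_recl big_ord0 /cofactor !det_mx11 /=.
rewrite !mxE /= addr0 expr0 expr1 mul1r mulN1r mulrN.
by congr (_ * _ - _ * _); congr (M _ _); apply/val_inj.
Qed.

Lemma cauchy_schwarz4 (R : rcfType) (a1 a2 a3 a4 b1 b2 b3 b4 : R) :
  a1 * b1 + a2 * b2 + a3 * b3 + a4 * b4 <=
  Num.sqrt (a1 ^+ 2 + a2 ^+ 2 + a3 ^+ 2 + a4 ^+ 2) *
  Num.sqrt (b1 ^+ 2 + b2 ^+ 2 + b3 ^+ 2 + b4 ^+ 2).
Proof.
rewrite -sqrtrM; last by rewrite !addr_ge0 ?sqr_ge0.
set p := _ + a4 * b4.
have [p_le0|p_gt0] := leP p 0; first exact: le_trans p_le0 (sqrtr_ge0 _).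
rewrite -[p]gtr0_norm // -sqrtr_sqr; apply: ler_wsqrtr.
have lagrange_identity :
  (a1 ^+ 2 + a2 ^+ 2 + a3 ^+ 2 + a4 ^+ 2) * (b1 ^+ 2 + b2 ^+ 2 + b3 ^+ 2 + b4 ^+ 2)
  = p ^+ 2 + ((a1 * b2 - a2 * b1) ^+ 2 + (a1 * b3 - a3 * b1) ^+ 2 +
    (a1 * b4 - a4 * b1) ^+ 2 + (a2 * b3 - a3 * b2) ^+ 2 +
    (a2 * b4 - a4 * b2) ^+ 2 + (a3 * b4 - a4 * b3) ^+ 2).
  by rewrite /p; ring.
by rewrite lagrange_identity lerDl !addr_ge0 ?sqr_ge0.
Qed.

Section W_properties.
Variables (R : realType) (y : R).

Lemma W_entries (M : 'M[R]_2) :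
  W y M = Num.sqrt (M 0 1 ^+ 2 + M 1 0 ^+ 2 + M 1 1 ^+ 2 + (\det M - y) ^+ 2).
Proof.
rewrite /W /bracket !big_ord_recr !big_ord0 /= !mxE /=.
have -> : widen_ord (leqnSn 1) ord_max = 0 :> 'I_2 by apply/val_inj.
have -> : ord_max = 1 :> 'I_2 by apply/val_inj.
by congr (Num.sqrt _); ring.
Qed.

Lemma sqr_W (M : 'M[R]_2) :
  W y M ^+ 2 = M 0 1 ^+ 2 + M 1 0 ^+ 2 + M 1 1 ^+ 2 + (\det M - y) ^+ 2.
Proof. by rewrite W_entries sqr_sqrtr // !addr_ge0 ?sqr_ge0. Qed.

Lemma W_gt0 (M : 'M[R]_2) : 0 < y -> 0 < W y M.
Proof.
move=> y_gt0; rewrite W_entries sqrtr_gt0 det_mx22.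
set b := M 0 1; set c := M 1 0; set d := M 1 1.
have [bcd_le0|bcd_gt0] := leP (b ^+ 2 + c ^+ 2 + d ^+ 2) 0; last first.
  by rewrite ltr_pwDl ?sqr_ge0.
have [-> -> ->] : [/\ b = 0, c = 0 & d = 0].
  by split; apply/eqP; rewrite -sqrf_eq0 eq_le sqr_ge0 andbT;
     apply: le_trans bcd_le0; nra.
by rewrite !mulr0 !expr0n /= !add0r oppr0 sub0r sqrrN exprn_gt0.
Qed.

Definition entry (i j : 'I_2) (M : 'M[R]_2) : R := M i j.

Global Instance is_diff_entry i j (x : 'M[R]_2) : is_diff x (entry i j) (entry i j).
Proof.
have entry_is_linear : linear (entry i j) by move=> k A B; rewrite /entry !mxE.
pose entry_lin : {linear 'M[R]_2 -> R} :=
  HB.pack (entry i j) (GRing.isLinear.Build _ _ _ _ _ entry_is_linear).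
have -> : entry i j = entry_lin by [].
apply: DiffDef; first exact/linear_differentiable/coord_continuous.
by rewrite diff_lin //; exact: coord_continuous.
Qed.

(* Written as an algebra of functions so that the [is_diff] instances
   compute its differential. *)
Definition sqW : 'M[R]_2 -> R :=
  entry 0 1 * entry 0 1 + entry 1 0 * entry 1 0 + entry 1 1 * entry 1 1 +
  (entry 0 0 * entry 1 1 - entry 0 1 * entry 1 0 - cst y) *
  (entry 0 0 * entry 1 1 - entry 0 1 * entry 1 0 - cst y).

Lemma W_sqrt_sqW : W y = Num.sqrt \o sqW.
Proof.
by apply/funext => M; rewrite W_entries det_mx22 /sqW /entry /= !fctE !expr2.
Qed.

Lemma is_diff_sqW xi : is_diff xi sqW (fun eta => 2 *
  (xi 0 1 * eta 0 1 + xi 1 0 * eta 1 0 + xi 1 1 * eta 1 1 +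
   (\det xi - y) *
   (xi 0 0 * eta 1 1 + eta 0 0 * xi 1 1 - xi 0 1 * eta 1 0 - eta 0 1 * xi 1 0))).
Proof.
eapply is_diff_eq; first by rewrite /sqW; typeclasses eauto.
apply/funext => eta; rewrite det_mx22 /entry !fctE /GRing.scale /= -[0 eta]/(0 : R).
ring.
Qed.

Lemma diff_W xi eta : 0 < W y xi -> 'd (W y) xi eta =
  (xi 0 1 * eta 0 1 + xi 1 0 * eta 1 0 + xi 1 1 * eta 1 1 +
   (\det xi - y) *
   (xi 0 0 * eta 1 1 + eta 0 0 * xi 1 1 - xi 0 1 * eta 1 0 - eta 0 1 * xi 1 0))
  / W y xi.
Proof.
rewrite W_sqrt_sqW /= => sqrt_gt0.
have sqW_gt0 : 0 < sqW xi by rewrite -sqrtr_gt0.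
have dsqrt : differentiable Num.sqrt (sqW xi).
  by apply/derivable1_diffP; have [] := is_derive1_sqrt sqW_gt0.
have [dsqW dsqW_val] := is_diff_sqW xi.
rewrite diff_comp //= diff1E // derive1E derive_sqrt // dsqW_val.
by rewrite /GRing.scale /=; field; rewrite gt_eqF.
Qed.

End W_properties.

Theorem proposition2p1 (R : realType) (y : R) (hy : 0 < y) (xi eta : 'M[R]_2) :
  rho y xi * \det eta <= W y (xi + eta) - W y xi - 'd (W y) xi eta.
Proof.
have W_xi_gt0 := W_gt0 xi hy.
have := cauchy_schwarz4 (xi 0 1) (xi 1 0) (xi 1 1) (\det xi - y)
  ((xi + eta) 0 1) ((xi + eta) 1 0) ((xi + eta) 1 1) (\det (xi + eta) - y).
rewrite -!W_entries => cauchy_schwarz.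
rewrite /rho diff_W // -subr_ge0 -(pmulr_rge0 _ W_xi_gt0).
set DW := (X in X / W y xi).
have -> : W y xi * (W y (xi + eta) - W y xi - DW / W y xi
                    - (\det xi - y) / W y xi * \det eta)
    = W y xi * W y (xi + eta) - W y xi ^+ 2 - DW - (\det xi - y) * \det eta.
  by field; rewrite gt_eqF.
(* What remains is Cauchy-Schwarz, once det (xi + eta) is expanded. *)
by rewrite sqr_W /DW; move: cauchy_schwarz; rewrite !det_mx22 !mxE; lra.
Qed.
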